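(* Assume the setting of: $X$ a finite-dimensional real Hilbert space, $Y$ a real Hilbert space, $\mathsf{K_h}: X\to Y$ linear, $\{\phi_1,\dots,\phi_n\}$ an orthonormal basis of $X$ with $\mathsf{K_h}\phi_i \neq c\,\mathsf{K_h}\phi_j$ for all $i\neq j$, $c\in\mathbb{R}$; $\mathsf{P}$ the orthogonal projection onto $\mathcal{N}(\mathsf{K_h})^\perp$ and $\mathsf{W}\phi_i = \|\mathsf{P}\phi_i\|_X\phi_i$. Let $\{j_1,\dots,j_r\}\subset\{1,\dots,n\}$. Let $x^*$ be the minimum norm least squares solution of $\mathsf{K_h}x = \mathsf{K_h}(\phi_{j_1}+\cdots+\phi_{j_r})$ and, for $q=1,\dots,r$, let $x_{j_q}^*$ be the minimum norm least squares solution of $\mathsf{K_h}x = \mathsf{K_h}\phi_{j_q}$. Then $$\mathsf{W}^{-1}x^* = \mathsf{W}^{-1}x_{j_1}^* + \cdots + \mathsf{W}^{-1}x_{j_r}^*,$$ where for each $q$, $$\mathsf{W}^{-1}x_{j_q}^* = \|\mathsf{P}\phi_{j_q}\|_X \sum_{i=1}^n \left(\frac{\mathsf{P}\phi_{j_q}}{\|\mathsf{P}\phi_{j_q}\|_X}, \frac{\mathsf{P}\phi_i}{\|\mathsf{P}\phi_i\|_X}\right)_X \phi_i,$$ and the coefficient of $\phi_{j_q}$ in this expansion is strictly larger than the coefficient of every $\phi_i$ with $i\neq j_q$.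
   Context: $\mathcal{N}(\mathsf{K_h})$ denotes the nullspace of $\mathsf{K_h}$. The minimum norm least squares solution of $\mathsf{K_h}x=b$ is $\mathsf{K_h}^\dagger b$, where $\mathsf{K_h}^\dagger$ is the Moore–Penrose inverse. *)

From HB Require Import structures.
From mathcomp Require Import all_boot all_order all_algebra.
From mathcomp Require Import reals.
Set Implicit Arguments. Unset Strict Implicit. Unset Printing Implicit Defensive.
Import Order.TTheory GRing.Theory Num.Theory.
Local Open Scope ring_scope.

Section Defs.
Variable R : realType.

Definition is_inner_product (V : lmodType R) (ip : V -> V -> R) : Prop :=
  [/\ (forall u v, ip u v = ip v u),
      (forall (a : R) u v w, ip (a *: u + v) w = a * ip u w + ip v w),
      (forall u, 0 <= ip u u) &
      (forall u, ip u u = 0 -> u = 0)].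

Definition ipnorm (V : lmodType R) (ip : V -> V -> R) (v : V) : R :=
  Num.sqrt (ip v v).

Definition is_orthonormal_basis (X : lmodType R) (ip : X -> X -> R) (n : nat)
    (phi : 'I_n -> X) : Prop :=
  (forall i j, ip (phi i) (phi j) = (i == j)%:R) /\
  (forall x, exists c : 'I_n -> R, x = \sum_(i < n) c i *: phi i).

Definition is_proj_null_perp (X Y : lmodType R) (ipX : X -> X -> R)
    (K : X -> Y) (P : X -> X) : Prop :=
  forall x, (forall z, K z = 0 -> ipX (P x) z = 0) /\ K (x - P x) = 0.

Definition is_mnls (X Y : lmodType R) (ipX : X -> X -> R) (ipY : Y -> Y -> R)
    (K : X -> Y) (b : Y) (x : X) : Prop :=
  let lsq z := forall w, ipnorm ipY (K z - b) <= ipnorm ipY (K w - b) in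
  lsq x /\ (forall z, lsq z -> ipnorm ipX x <= ipnorm ipX z).

(* W^{-1}, where W phi_i = ||P phi_i|| phi_i (linear), i.e.
   W^{-1} x = sum_i (x, phi_i) / ||P phi_i|| phi_i *)
Definition Winv (X : lmodType R) (ipX : X -> X -> R) (n : nat)
    (phi : 'I_n -> X) (P : X -> X) (x : X) : X :=
  \sum_(i < n) (ipX x (phi i) / ipnorm ipX (P (phi i))) *: phi i.

Definition expcoef (X : lmodType R) (ipX : X -> X -> R) (n : nat)
    (phi : 'I_n -> X) (P : X -> X) (j i : 'I_n) : R :=
  ipnorm ipX (P (phi j)) *
  ipX ((ipnorm ipX (P (phi j)))^-1 *: P (phi j))
      ((ipnorm ipX (P (phi i)))^-1 *: P (phi i)).
End Defs.

From HB Require Import structures.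
From mathcomp Require Import all_boot all_order all_algebra.
From mathcomp Require Import reals.
From mathcomp Require Import ring lra.
Import Order.TTheory GRing.Theory Num.Theory.
Local Open Scope ring_scope.
Set Implicit Arguments. Unset Strict Implicit.

(* The whole statement rests on one observation: the minimum norm least
   squares solution of K x = K v is P v, the orthogonal projection of v onto
   N(K)^perp.  Indeed P v solves K x = K v exactly, so every least squares
   solution x satisfies K x = K v, hence x - P v lies in N(K), and by
   Pythagoras ||x||^2 = ||P v||^2 + ||x - P v||^2.

   Consequently x^* = P (phi_j1 + ... + phi_jr) = sum_q P phi_jq = sum_q x_jq^*
   (P is additive, being characterised by two linear conditions), and the
   first claim follows from the additivity of W^{-1}.  For the expansion, the
   coefficient (x_j^*, phi_i) / ||P phi_i|| of W^{-1} x_j^* equals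
   (P phi_j, P phi_i) / ||P phi_i||, which is the announced expcoef j i.
   Finally the dominance of the diagonal coefficient is the strict
   Cauchy-Schwarz inequality (u, v) < ||u|| ||v|| for u = P phi_j and
   v = P phi_i: these are not parallel because K u = K phi_j and
   K v = K phi_i are not parallel by hypothesis. *)

Section InnerProduct.
Variable R : realType.
Variable X : lmodType R.
Variable ip : X -> X -> R.
Hypothesis hip : is_inner_product ip.

Lemma ipC u v : ip u v = ip v u.
Proof. by case: hip => ipC _ _ _; apply: ipC. Qed.

Lemma ipDl a u v w : ip (a *: u + v) w = a * ip u w + ip v w.
Proof. by case: hip => _ ipDl _ _; apply: ipDl. Qed.

Lemma ip_ge0 u : 0 <= ip u u.
Proof. by case: hip => _ _ ip_ge0 _; apply: ip_ge0. Qed.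

Lemma ip_eq0 u : ip u u = 0 -> u = 0.
Proof. by case: hip => _ _ _ ip_eq0; apply: ip_eq0. Qed.

Lemma ip0l w : ip 0 w = 0.
Proof.
have h := ipDl (-1) 0 0 w.
by rewrite scaler0 addr0 mulN1r in h; rewrite h addNr.
Qed.

Lemma ipD u v w : ip (u + v) w = ip u w + ip v w.
Proof. by rewrite -{1}(scale1r u) ipDl mul1r. Qed.

Lemma ipZ a u w : ip (a *: u) w = a * ip u w.
Proof. by rewrite -(addr0 (a *: u)) ipDl ip0l addr0. Qed.

Lemma ipB u v w : ip (u - v) w = ip u w - ip v w.
Proof. by rewrite ipD -scaleN1r ipZ mulN1r. Qed.

Lemma ip_suml (I : finType) (A : {set I}) (f : I -> X) w :
  ip (\sum_(j in A) f j) w = \sum_(j in A) ip (f j) w.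
Proof. exact: (big_morph (fun u => ip u w) (fun u v => ipD u v w) (ip0l w)). Qed.

Lemma ipDr u v w : ip w (u + v) = ip w u + ip w v.
Proof. by rewrite ipC ipD !(ipC _ w). Qed.

Lemma ipZr a u w : ip w (a *: u) = a * ip w u.
Proof. by rewrite ipC ipZ ipC. Qed.

Lemma ipBr u v w : ip w (u - v) = ip w u - ip w v.
Proof. by rewrite ipC ipB ipC (ipC v). Qed.

Lemma ip_gt0 u : u != 0 -> 0 < ip u u.
Proof. by move=> u0; rewrite lt_def ip_ge0 andbT; apply: contra u0 => /eqP/ip_eq0->. Qed.

Lemma sqr_ipnorm u : ipnorm ip u ^+ 2 = ip u u.
Proof. exact/sqr_sqrtr/ip_ge0. Qed.

Lemma ipnorm0 : ipnorm ip 0 = 0.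
Proof. by rewrite /ipnorm ip0l sqrtr0. Qed.

Lemma ipnorm_eq0 u : ipnorm ip u = 0 -> u = 0.
Proof. by move=> h; apply: ip_eq0; rewrite -sqr_ipnorm h expr0n. Qed.

Lemma ipnorm_gt0 u : u != 0 -> 0 < ipnorm ip u.
Proof. by move=> /ip_gt0; rewrite sqrtr_gt0. Qed.

Lemma ip_pythagoras u w : ip u w = 0 -> ip (u + w) (u + w) = ip u u + ip w w.
Proof. by move=> uw; rewrite ipD !ipDr uw (ipC w u) uw addr0 add0r. Qed.

(* Strict Cauchy-Schwarz inequality: equality (or worse) forces u to be a
   multiple of v, namely of its component t v along v. *)
Lemma ip_lt_mul_norm u v :
  v != 0 -> (forall t : R, u != t *: v) -> ip u v < ipnorm ip u * ipnorm ip v.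
Proof.
move=> v0 not_par; have vv := ip_gt0 v0.
rewrite ltNge; apply/negP => hge.
set t := ip u v / ip v v; set w := u - t *: v.
have ww_vv : ip w w * ip v v = ip u u * ip v v - ip u v ^+ 2.
  rewrite /w ipB !ipBr !ipZ !ipZr (ipC v u) /t.
  by field; rewrite gt_eqF.
have uv_sq : ip u u * ip v v <= ip u v ^+ 2.
  rewrite -!sqr_ipnorm -exprMn.
  have : 0 <= ipnorm ip u * ipnorm ip v by rewrite mulr_ge0 ?sqrtr_ge0.
  by nra.
have ww0 : ip w w = 0.
  apply/le_anti; rewrite ip_ge0 andbT -(pmulr_lle0 _ vv) ww_vv.
  by rewrite subr_le0.
have := not_par t; rewrite -subr_eq0 -/w.
by rewrite (ip_eq0 ww0) eqxx.
Qed.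

End InnerProduct.

Section Projection.
Variable R : realType.
Variables X Y : lmodType R.
Variable ipX : X -> X -> R.
Hypothesis hX : is_inner_product ipX.
Variable K : {linear X -> Y}.
Variable P : X -> X.
Hypothesis hP : is_proj_null_perp ipX K P.

Lemma KP x : K (P x) = K x.
Proof. by have [_ h] := hP x; apply/esym/eqP; rewrite -subr_eq0 -linearB h. Qed.

Lemma P_perp x z : K z = 0 -> ipX (P x) z = 0.
Proof. by have [h _] := hP x; apply: h. Qed.

Lemma ker_sub_P x y : K y = K x -> K (y - P x) = 0.
Proof. by move=> Kyx; rewrite linearB Kyx KP subrr. Qed.

Lemma P_uniq x q : (forall z, K z = 0 -> ipX q z = 0) -> K q = K x -> q = P x.
Proof.
move=> q_perp Kqx; have hz := ker_sub_P Kqx.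
apply/eqP; rewrite -subr_eq0; apply/eqP/(ip_eq0 hX).
by rewrite (ipB hX) q_perp // P_perp // subrr.
Qed.

Lemma P_sum (I : finType) (A : {set I}) (f : I -> X) :
  P (\sum_(j in A) f j) = \sum_(j in A) P (f j).
Proof.
apply/esym/P_uniq; last by rewrite !linear_sum; apply: eq_bigr => j _; apply: KP.
by move=> z Kz; rewrite (ip_suml hX); apply: big1 => j _; apply: P_perp.
Qed.

Lemma ip_P_proj x y : ipX (P x) y = ipX (P x) (P y).
Proof.
apply/eqP; rewrite -subr_eq0 -(ipBr hX); apply/eqP/P_perp.
by have [_ h] := hP y.
Qed.

Variable ipY : Y -> Y -> R.
Hypothesis hY : is_inner_product ipY.

Lemma mnls_eq_P v x : is_mnls ipX ipY K (K v) x -> x = P v.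
Proof.
case=> x_lsq x_min.
have P_lsq w : ipnorm ipY (K (P v) - K v) <= ipnorm ipY (K w - K v).
  by rewrite KP subrr (ipnorm0 hY) sqrtr_ge0.
have Kxv : K x = K v.
  apply/eqP; rewrite -subr_eq0; apply/eqP/(ipnorm_eq0 hY)/le_anti.
  by have := x_lsq (P v); rewrite KP subrr (ipnorm0 hY) sqrtr_ge0 => ->.
have xP_ker := ker_sub_P Kxv.
have x_norm : ipX x x = ipX (P v) (P v) + ipX (x - P v) (x - P v).
  by rewrite -(ip_pythagoras hX (P_perp v xP_ker)) addrC subrK.
have := x_min _ P_lsq; rewrite /ipnorm ler_sqrt ?(ip_ge0 hX) //.
rewrite x_norm -lerBrDl subrr => h.
apply/eqP; rewrite -subr_eq0; apply/eqP/(ip_eq0 hX)/le_anti.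
by rewrite h (ip_ge0 hX).
Qed.

End Projection.

Section Winv.
Variable R : realType.
Variable X : lmodType R.
Variable ipX : X -> X -> R.
Hypothesis hX : is_inner_product ipX.
Variable n : nat.
Variable phi : 'I_n -> X.
Variable P : X -> X.

Lemma Winv_sum (I : finType) (A : {set I}) (f : I -> X) :
  Winv ipX phi P (\sum_(j in A) f j) = \sum_(j in A) Winv ipX phi P (f j).
Proof.
rewrite /Winv exchange_big /=; apply: eq_bigr => i _.
by rewrite (ip_suml hX) mulr_suml scaler_suml.
Qed.

Lemma expcoefE j i :
  expcoef ipX phi P j i = ipX (P (phi j)) (P (phi i)) / ipnorm ipX (P (phi i)).
Proof.
rewrite /expcoef (ipZ hX) (ipZr hX).
have [Pj0|Pj_ne0] := eqVneq (P (phi j)) 0.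
  by rewrite Pj0 (ip0l hX) !mulr0 mul0r.
rewrite mulVKf ?gt_eqF ?(ipnorm_gt0 hX) //.
exact: mulrC.
Qed.

Lemma expcoef_diag j : expcoef ipX phi P j j = ipnorm ipX (P (phi j)).
Proof.
rewrite expcoefE -(sqr_ipnorm hX) expr2.
have [->|nz] := eqVneq (ipnorm ipX (P (phi j))) 0; first by rewrite mulr0 mul0r.
by rewrite mulfK.
Qed.

Variables (Y : lmodType R) (K : {linear X -> Y}).
Hypothesis hP : is_proj_null_perp ipX K P.

Lemma Winv_P_expansion j :
  Winv ipX phi P (P (phi j)) = \sum_(i < n) expcoef ipX phi P j i *: phi i.
Proof.
apply: eq_bigr => i _; congr (_ *: _).
by rewrite expcoefE (ip_P_proj hX hP).
Qed.

(* The diagonal coefficient dominates as soon as K phi_j is not a multiple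
   of K phi_i: this is strict Cauchy-Schwarz for P phi_j and P phi_i. *)
Lemma expcoef_lt_diag j i :
  (forall c : R, K (phi j) <> c *: K (phi i)) ->
  (forall c : R, K (phi i) <> c *: K (phi j)) ->
  expcoef ipX phi P j i < expcoef ipX phi P j j.
Proof.
move=> Kji Kij.
have not_par t : P (phi j) != t *: P (phi i).
  by apply/eqP => e; apply: (Kji t); rewrite -(KP hP) e linearZ (KP hP).
have Pi_ne0 : P (phi i) != 0.
  apply/eqP => e; apply: (Kij 0).
  by rewrite scale0r -(KP hP) e linear0.
rewrite expcoefE expcoef_diag ltr_pdivrMr ?(ipnorm_gt0 hX) //.
exact: ip_lt_mul_norm.
Qed.

End Winv.

Theorem corollary1 (R : realType) (X Y : lmodType R)
  (ipX : X -> X -> R) (ipY : Y -> Y -> R)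
  (hX : is_inner_product ipX) (hY : is_inner_product ipY)
  (K : {linear X -> Y}) (n : nat) (phi : 'I_n -> X)
  (hphi : is_orthonormal_basis ipX phi)
  (hK : forall i j : 'I_n, i != j -> forall c : R, K (phi i) <> c *: K (phi j))
  (P : X -> X) (hP : is_proj_null_perp ipX K P)
  (J : {set 'I_n}) (xstar : X) (xs : 'I_n -> X)
  (hxstar : is_mnls ipX ipY K (K (\sum_(j in J) phi j)) xstar)
  (hxs : forall j, j \in J -> is_mnls ipX ipY K (K (phi j)) (xs j)) :
  Winv ipX phi P xstar = \sum_(j in J) Winv ipX phi P (xs j) /\
  (forall j, j \in J ->
     Winv ipX phi P (xs j) = \sum_(i < n) expcoef ipX phi P j i *: phi i /\
     (forall i, i != j -> expcoef ipX phi P j i < expcoef ipX phi P j j)).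
Proof.
have xs_P j : j \in J -> xs j = P (phi j).
  by move=> jJ; apply: (mnls_eq_P hX hP hY (hxs j jJ)).
split.
  rewrite (mnls_eq_P hX hP hY hxstar) (P_sum hX hP) (Winv_sum hX).
  by apply: eq_bigr => j jJ; rewrite xs_P.
move=> j jJ; rewrite xs_P //; split; first exact: (Winv_P_expansion hX phi hP).
move=> i ij; apply: (expcoef_lt_diag hX hP); apply: hK => //.
by rewrite eq_sym.
Qed.
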